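(* Let $M=(Q_M,\Sigma,\delta_M,s_M,F_M)$ be a complete DFA with $m\ge 2$ states and $N=(Q_N,\Sigma,\delta_N,s_N,F_N)$ a complete DFA with $n\ge 1$ states over the same alphabet, and suppose $k:=|F_M\setminus\{s_M\}|\ge 1$. Then there exists a complete DFA with at most $(2^{m-1}+2^{m-k-1})\cdot n-n+1$ states that accepts $L(M)^*\cap L(N)$.
   Context: A DFA is a 5-tuple $(Q,\Sigma,\delta,s,F)$ with total transition function $\delta:Q\times\Sigma\to Q$ (complete DFA); $L(M)$ is the accepted language; $L^*$ is the Kleene star of $L$. *)

From mathcomp Require Import all_boot.
Set Implicit Arguments. Unset Strict Implicit. Unset Printing Implicit Defensive.

Record dfa (A : finType) := Dfa {
  state : finType;
  delta : state -> A -> state;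
  start : state;
  final : {set state}
}.

Definition run (A : finType) (M : dfa A) (q : state M) (w : seq A) : state M :=
  foldl (@delta A M) q w.

Definition accepts (A : finType) (M : dfa A) (w : seq A) : Prop :=
  run (start M) w \in final M.

Definition kstar (A : finType) (L : seq A -> Prop) (w : seq A) : Prop :=
  exists ws : seq (seq A), (forall u, u \in ws -> L u) /\ flatten ws = w.

From mathcomp Require Import all_boot zify.
From Stdlib Require Import Setoid.
Set Implicit Arguments. Unset Strict Implicit. Unset Printing Implicit Defensive.

(* Run the subset construction for L(M)^* in parallel with N.  A subset of
   states of M reached by the star automaton is nonempty and contains the start
   state s_M as soon as it meets F_M, since reaching a final state allows a new
   factor to begin.  Such subsets either contain s_M (at most 2^(m-1) of them)
   or avoid s_M and F_M altogether (at most 2^(m-k-1) - 1 nonempty ones).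
   Pairing them with the n states of N and adding one fresh start state for the
   empty word gives (2^(m-1) + 2^(m-k-1) - 1) n + 1 states. *)

Section KleeneStar.
Variables (A : finType) (L : seq A -> Prop).

Lemma kstar_nil : kstar L [::].
Proof. by exists [::]. Qed.

Lemma kstar_cat u v : kstar L u -> L v -> kstar L (u ++ v).
Proof.
case=> ws [Lws <-] Lv; exists (rcons ws v); split.
  by move=> x; rewrite mem_rcons inE => /orP [/eqP -> | /Lws].
by rewrite -cats1 flatten_cat /= cats0.
Qed.

Lemma kstar_rcons w a :
  kstar L (rcons w a) <-> exists u v, [/\ w = u ++ v, kstar L u & L (rcons v a)].
Proof.
split; last by case=> u [v [-> Lu Lv]]; rewrite rcons_cat; apply: kstar_cat.
case=> ws [Lws]; elim/last_ind: ws Lws w => [|ws x IHws] Lws w; first by case: w.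
have Lx : L x by apply: Lws; rewrite mem_rcons mem_head.
have {}Lws u : u \in ws -> L u by move=> wsu; apply: Lws; rewrite mem_rcons inE wsu orbT.
rewrite -cats1 flatten_cat /= cats0; case/lastP: x Lx => [_ | v b Lvb].
  by rewrite cats0; apply: IHws.
rewrite -rcons_cat => /rcons_inj [<- <-].
by exists (flatten ws), v; split => //; exists ws.
Qed.

End KleeneStar.

Lemma run_rcons (A : finType) (M : dfa A) (q : state M) w a :
  run q (rcons w a) = delta (run q w) a.
Proof. exact: foldl_rcons. Qed.

Lemma card_sets_with (T : finType) (x : T) : #|[set X : {set T} | x \in X]| = 2 ^ (#|T| - 1).
Proof.
have -> : [set X : {set T} | x \in X] = [set x |: Y | Y in powerset [set~ x]].
  apply/setP => X; rewrite inE; apply/idP/imsetP => [xX | [Y _ ->]]; last exact: setU11.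
  exists (X :\ x); last by rewrite setD1K.
  by rewrite powersetE; apply/subsetP => y; rewrite !inE => /andP [].
rewrite card_in_imset ?card_powerset ?cardsC1 ?subn1 // => X Y.
rewrite !powersetE => /subsetP nxX /subsetP nxY eqXY.
have nX : x \notin X by apply/negP => /nxX; rewrite !inE eqxx.
have nY : x \notin Y by apply/negP => /nxY; rewrite !inE eqxx.
by rewrite -(setU1K nX) eqXY setU1K.
Qed.

Lemma card_nonempty_subsets (T : finType) (C : {set T}) :
  #|[set X : {set T} | (X \subset C) && (X != set0)]| = 2 ^ #|C| - 1.
Proof.
have -> : [set X : {set T} | (X \subset C) && (X != set0)] = powerset C :\ set0.
  by apply/setP => X; rewrite in_setD1 powersetE inE andbC.
by rewrite -card_powerset (cardsD1 set0 (powerset C)) powersetE sub0set addKn.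
Qed.

Section StarAutomaton.
Variables (A : finType) (M : dfa A).
Local Notation Q := (state M).
Local Notation s := (start M).
Local Notation F := (final M).

Definition star_reach (w : seq A) (q : Q) : Prop :=
  exists u v, [/\ w = u ++ v, kstar (accepts M) u & run s v = q].

Lemma star_reach_nil q : star_reach [::] q <-> q = s.
Proof.
split; first by case=> [[|a u]] [[|b v]] [] // _ _ <-.
by move->; exists [::], [::]; split => //; exact: kstar_nil.
Qed.

Lemma kstar_rcons_reach w a :
  kstar (accepts M) (rcons w a) <-> exists2 p, star_reach w p & delta p a \in F.
Proof.
rewrite kstar_rcons; split.
  by case=> u [v [-> Ku]]; rewrite /accepts run_rcons => Fv; exists (run s v) => //; exists u, v.
by case=> _ [u [v [-> Ku <-]]] Fv; exists u, v; rewrite /accepts run_rcons.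
Qed.

Lemma star_reach_rcons w a q :
  star_reach (rcons w a) q <->
  (exists2 p, star_reach w p & q = delta p a) \/ (q = s /\ kstar (accepts M) (rcons w a)).
Proof.
split.
  case=> u [v [wa Ku <-]]; case/lastP: v wa => [|v b].
    by rewrite cats0 => wa; right; rewrite wa.
  rewrite -rcons_cat => /rcons_inj [-> ->]; left.
  by exists (run s v); [exists u, v | rewrite run_rcons].
case=> [[p [u [v [-> Ku <-]]] ->] | [-> Kwa]].
  by exists u, (rcons v a); rewrite rcons_cat run_rcons.
by exists (rcons w a), [::]; rewrite cats0.
Qed.

Definition star_close (X : {set Q}) : {set Q} :=
  if X :&: F != set0 then s |: X else X.

Definition star_step (X : {set Q}) (a : A) : {set Q} :=
  star_close [set delta q a | q in X].

Lemma mem_star_close X q : (q \in star_close X) = (q \in X) || (q == s) && (X :&: F != set0).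
Proof. by rewrite /star_close; case: ifP; rewrite ?inE ?andbF ?orbF // andbT orbC. Qed.

Lemma star_closeIF X : (star_close X :&: F != set0) = (X :&: F != set0).
Proof.
rewrite /star_close; case: ifPn => [XF | /negbTE //]; apply/set0Pn.
by case/set0Pn: XF => x /setIP [Xx Fx]; exists x; rewrite !inE Xx Fx orbT.
Qed.

Definition star_subsets (w : seq A) : {set Q} := foldl star_step [set s] w.

Lemma mem_star_subsets w q : q \in star_subsets w <-> star_reach w q.
Proof.
elim/last_ind: w q => [|w a IHw] q; first by rewrite star_reach_nil inE; split => /eqP.
rewrite star_reach_rcons kstar_rcons_reach /star_subsets foldl_rcons -/(star_subsets w).
rewrite mem_star_close; split.
  case/orP=> [/imsetP [p /IHw wp ->] | /andP [/eqP -> /set0Pn [r]]]; first by left; exists p.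
  by rewrite inE => /andP [/imsetP [p /IHw wp ->] Fpa]; right; split => //; exists p.
case=> [[p /IHw wp ->] | [-> [p /IHw wp Fpa]]]; first by rewrite (imset_f _ wp).
by rewrite eqxx; apply/orP; right; apply/set0Pn; exists (delta p a); rewrite inE (imset_f _ wp).
Qed.

Lemma star_subsets_rconsIF w a :
  (star_subsets (rcons w a) :&: F != set0) <-> kstar (accepts M) (rcons w a).
Proof.
rewrite kstar_rcons_reach /star_subsets foldl_rcons star_closeIF; split.
  by case/set0Pn=> _ /setIP [/imsetP [p /mem_star_subsets wp ->] Fpa]; exists p.
by case=> p /mem_star_subsets wp Fpa; apply/set0Pn; exists (delta p a); rewrite inE (imset_f _ wp).
Qed.

Definition star_set (X : {set Q}) : bool := (X != set0) && ((X :&: F != set0) ==> (s \in X)).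

Lemma star_set1 : star_set [set s].
Proof. by rewrite /star_set set11 implybT andbT; apply/set0Pn; exists s; rewrite set11. Qed.

Lemma star_set_step X a : star_set X -> star_set (star_step X a).
Proof.
case/andP=> /set0Pn [p Xp] _; rewrite /star_set /star_step /star_close.
case: ifP => [_ | ->]; first by rewrite setU11 implybT andbT; apply/set0Pn; exists s; rewrite setU11.
by rewrite andbT; apply/set0Pn; exists (delta p a); exact: imset_f.
Qed.

Definition star_state := {X : {set Q} | star_set X}.

Definition star_state0 : star_state := exist _ [set s] star_set1.

Definition star_next (x : star_state) (a : A) : star_state :=
  exist _ (star_step (val x) a) (star_set_step a (valP x)).

Lemma val_foldl_star_next w : val (foldl star_next star_state0 w) = star_subsets w.
Proof.
rewrite /star_subsets -[[set s]]/(val star_state0).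
by elim: w star_state0 => [|a w IHw] x //=; rewrite IHw.
Qed.

Lemma card_star_sets :
  #|[pred X | star_set X]| < 2 ^ (#|Q| - 1) + 2 ^ (#|Q| - #|F :\ s| - 1).
Proof.
set C := ~: (s |: (F :\ s)).
have cardC : #|C| = #|Q| - #|F :\ s| - 1.
  by rewrite cardsCs setCK cardsU1 setD11 add1n subnS subn1.
have star_cases : [pred X | star_set X] \subset
    [set X : {set Q} | s \in X] :|: [set X : {set Q} | (X \subset C) && (X != set0)].
  apply/subsetP => X; rewrite !inE /star_set => /andP [X0 sFX].
  case: (boolP (s \in X)) => //= sX; rewrite X0 andbT.
  apply/subsetP => x Xx; rewrite !inE negb_or; apply/andP; split.
    by apply: contraNneq sX => <-.
  apply/negP => /andP [_ Fx]; move: sFX; rewrite (negbTE sX) implybF negbK.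
  by move/eqP/setP/(_ x); rewrite !inE Xx Fx.
apply: leq_ltn_trans (subset_leq_card star_cases) _.
rewrite cardsU; apply: leq_ltn_trans (leq_subr _ _) _.
by rewrite card_sets_with card_nonempty_subsets cardC ltn_add2l subn1 ltn_predL expn_gt0.
Qed.

End StarAutomaton.

Section StarIntersection.
Variables (A : finType) (M N : dfa A).
Local Notation P := (star_state M * state N)%type.

Definition star_cap_delta (o : option P) (a : A) : option P :=
  let: (x, q) := odflt (star_state0 M, start N) o in Some (star_next x a, delta q a).

(* The fresh start state [None] accepts the empty word, which lies in L(M)^*
   even when the subset [set s_M] is not accepting. *)
Definition star_cap_final : {set option P} :=
  [set o | if o is Some (x, q) then (val x :&: final M != set0) && (q \in final N)
           else start N \in final N].

Definition star_cap_dfa : dfa A := Dfa star_cap_delta None star_cap_final.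

Lemma run_star_cap_rcons w a :
  run (start star_cap_dfa) (rcons w a) =
  Some (foldl (@star_next _ M) (star_state0 M) (rcons w a), run (start N) (rcons w a)).
Proof.
have run_pair v : odflt (star_state0 M, start N) (run (start star_cap_dfa) v) =
    (foldl (@star_next _ M) (star_state0 M) v, run (start N) v).
  elim/last_ind: v => [|v b IHv] //.
  by rewrite !run_rcons !foldl_rcons /= /star_cap_delta IHv.
by rewrite run_rcons /= /star_cap_delta run_pair foldl_rcons run_rcons.
Qed.

Lemma star_cap_correct w : accepts star_cap_dfa w <-> kstar (accepts M) w /\ accepts N w.
Proof.
rewrite /accepts; case/lastP: w => [|w a].
  by rewrite inE /=; split => [-> | [] //]; split => //; exact: kstar_nil.
rewrite run_star_cap_rcons inE val_foldl_star_next -star_subsets_rconsIF.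
by split => [/andP [] | [-> ->]].
Qed.

End StarIntersection.

Lemma leq_card_option_prod (T U : finType) (X : nat) :
  #|T| < X -> #|{: option (T * U)}| <= X * #|U| - #|U| + 1.
Proof. by rewrite card_option card_prod => ltTX; nia. Qed.

Theorem theorem4 (A : finType) (M N : dfa A) :
  2 <= #|state M| ->
  1 <= #|state N| ->
  1 <= #|final M :\ start M| ->
  exists D : dfa A,
    #|state D| <= (2 ^ (#|state M| - 1) + 2 ^ (#|state M| - #|final M :\ start M| - 1))
                  * #|state N| - #|state N| + 1 /\
    forall w : seq A, accepts D w <-> (kstar (accepts M) w /\ accepts N w).
Proof.
move=> _ _ _; exists (star_cap_dfa M N); split; last exact: star_cap_correct.
by apply: leq_card_option_prod; rewrite card_sig; apply: card_star_sets.
Qed.
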